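(* Let $(M,d,X,C)$ be a metric coordinate system for which $(X,d_C)$ is locally compact, let $S$ be a closed subset of $(X,d_C)$, and let $V:(X,d_C)\to(TX,d_C^T)$ be a locally Lipschitz metric-coordinate vector field such that for each $x\in S$ there exists a curve $\phi^x:[0,\delta)\to S$ (some $\delta>0$) belonging to the equivalence class $V(x)$. Then $S$ is positively invariant with respect to $V$: every solution $\sigma:[0,\delta)\to X$ of $V$ with $\sigma(0)\in S$ satisfies $\sigma(t)\in S$ for all $t\in[0,\delta)$.
   Context: A metric coordinate system is a quadruple $(M,d,X,C)$ where $(M,d)$ is a metric space, $X\subset M$, and $C\subset M$ is a metric coordinatizing set for $X$: for all $x,y\in X$ with $x\neq y$ there is $c\in C$ with $d(x,c)\neq d(y,c)$. For $x\in X$ and $c\in C$ write $x_c:=d(x,c)$. The metric $d_C$ on $X$ is $d_C(x,y):=\sup_{c\in C}|x_c-y_c|$ (finite since $|x_c-y_c|\le d(x,y)$). For a curve $\phi:[0,\delta)\to X$ ($\delta>0$) write $\phi_c(t):=d(\phi(t),c)$; its forward metric-coordinate derivative at $t$ is $\phi_C^+(t):=(\phi_c^+(t))_{c\in C}\in\mathbb{R}^C$, where $\phi_c^+(t):=\lim_{h\to0^+}\frac{\phi_c(t+h)-\phi_c(t)}{h}$, provided all these limits exist. Let $X^+$ be the set of curves $\phi:[0,\delta)\to X$ (any $\delta>0$), continuous with respect to $d_C$, for which $\phi_C^+(0)$ exists and $\sup_{c\in C}|\phi_c^+(0)|<\infty$. Define $\phi\sim\psi$ iff $\phi(0)=\psi(0)$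 and $\phi_C^+(0)=\psi_C^+(0)$. The tangent bundle is $TX:=X^+/\!\sim$, and $T_xX$ is the set of classes $[\phi]$ with $\phi(0)=x$. The metric $d_C^T$ on $TX$ is $d_C^T([\phi],[\psi]):=\max\{d_C(\phi(0),\psi(0)),\ \sup_{c\in C}|\phi_c^+(0)-\psi_c^+(0)|\}$. A metric-coordinate vector field is a map $V:X\to TX$ with $V(x)\in T_xX$ for each $x\in X$. It is locally Lipschitz if $V:(X,d_C)\to(TX,d_C^T)$ is locally Lipschitz, i.e. every point has a $d_C$-neighborhood and a constant $K\ge0$ with $d_C^T(V(y),V(z))\le K\,d_C(y,z)$ for $y,z$ in that neighborhood. A solution to $V$ with initial condition $x\in X$ is a curve $\sigma:[0,\delta)\to X$ ($\delta>0$), continuous with respect to $d_C$, with $\sigma(0)=x$, such that for every $t\in[0,\delta)$ the forward metric-coordinate derivative $\sigma_C^+(t)$ exists and equals $\phi_C^+(0)$ for (any) $\phi\in V(\sigma(t))$. *)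

From Stdlib Require Import Reals List.
From Coquelicot Require Import Coquelicot.
Open Scope R_scope.

Record is_metric {M : Type} (d : M -> M -> R) : Prop := {
  metric_nonneg : forall x y, 0 <= d x y;
  metric_eq0 : forall x y, d x y = 0 <-> x = y;
  metric_sym : forall x y, d x y = d y x;
  metric_tri : forall x y z, d x z <= d x y + d y z }.

Definition coordinatizing {M : Type} (d : M -> M -> R) (X C : M -> Prop) : Prop :=
  forall x y, X x -> X y -> x <> y -> exists c, C c /\ d x c <> d y c.

Definition metric_coord_system {M : Type} (d : M -> M -> R) (X C : M -> Prop) : Prop :=
  is_metric d /\ coordinatizing d X C.

(* supremum over c in C of a nonnegative quantity (0 if C is empty; the
   quantities used below are always bounded). *)
Definition supC {M : Type} (C : M -> Prop) (f : M -> R) : R :=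
  real (Lub_Rbar (fun r => exists c, C c /\ r = f c)).

Definition dC {M : Type} (d : M -> M -> R) (C : M -> Prop) (x y : M) : R :=
  supC C (fun c => Rabs (d x c - d y c)).

Definition dC_open {M : Type} d C (X : M -> Prop) (U : M -> Prop) : Prop :=
  forall x, X x -> U x -> exists r, 0 < r /\
    forall y, X y -> dC d C x y < r -> U y.

Definition dC_closed {M : Type} d C (X : M -> Prop) (S : M -> Prop) : Prop :=
  (forall x, S x -> X x) /\ dC_open d C X (fun x => ~ S x).

Definition dC_compact {M : Type} d C (X : M -> Prop) (K : M -> Prop) : Prop :=
  (forall x, K x -> X x) /\
  forall (I : Type) (U : I -> M -> Prop),
    (forall i, dC_open d C X (U i)) ->
    (forall x, K x -> exists i, U i x) ->
    exists l : list I, forall x, K x -> exists i, In i l /\ U i x.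

Definition dC_locally_compact {M : Type} d C (X : M -> Prop) : Prop :=
  forall x, X x -> exists K, dC_compact d C X K /\
    exists r, 0 < r /\ forall y, X y -> dC d C x y < r -> K y.

Definition is_fwd_deriv (f : R -> R) (t l : R) : Prop :=
  forall eps, 0 < eps -> exists eta, 0 < eta /\
    forall h, 0 < h < eta -> Rabs ((f (t + h) - f t) / h - l) < eps.

Definition dC_curve {M : Type} d C (X : M -> Prop) (phi : R -> M) (delta : R) : Prop :=
  0 < delta /\
  (forall t, 0 <= t < delta -> X (phi t)) /\
  (forall t, 0 <= t < delta -> forall eps, 0 < eps -> exists eta, 0 < eta /\
     forall s, 0 <= s < delta -> Rabs (s - t) < eta -> dC d C (phi s) (phi t) < eps).

Definition fwd_coord_deriv {M : Type} (d : M -> M -> R) (C : M -> Prop)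
  (phi : R -> M) (t : R) (v : M -> R) : Prop :=
  forall c, C c -> is_fwd_deriv (fun s => d (phi s) c) t (v c).

Definition in_tangent_class {M : Type} d C (X : M -> Prop)
  (phi : R -> M) (delta : R) (x : M) (v : M -> R) : Prop :=
  dC_curve d C X phi delta /\ phi 0 = x /\ fwd_coord_deriv d C phi 0 v /\
  exists B, forall c, C c -> Rabs (v c) <= B.

(* A tangent vector at x is represented by its coordinate derivative vector
   v (only the values on C matter); a vector field V assigns to x in X a
   vector V x which is realised by some curve of X^+ based at x. *)
Definition vector_field {M : Type} d C (X : M -> Prop) (V : M -> M -> R) : Prop :=
  forall x, X x -> exists phi delta, in_tangent_class d C X phi delta x (V x).

Definition dCT {M : Type} d C (x : M) (v : M -> R) (y : M) (w : M -> R) : R :=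
  Rmax (dC d C x y) (supC C (fun c => Rabs (v c - w c))).

Definition locally_lipschitz_field {M : Type} d C (X : M -> Prop) (V : M -> M -> R) : Prop :=
  forall x, X x -> exists r K, 0 < r /\ 0 <= K /\
    forall y z, X y -> X z -> dC d C x y < r -> dC d C x z < r ->
      dCT d C y (V y) z (V z) <= K * dC d C y z.

Definition is_solution {M : Type} d C (X : M -> Prop) (V : M -> M -> R)
  (sigma : R -> M) (delta : R) (x : M) : Prop :=
  dC_curve d C X sigma delta /\ sigma 0 = x /\
  forall t, 0 <= t < delta -> fwd_coord_deriv d C sigma t (V (sigma t)).

(* Real induction in t reduces the theorem to a local statement: if x = sigma(t0) lies in S,
   then sigma stays in S for a short time eps. Work in a compact d_C-ball around x on which V
   is L-Lipschitz, and fix eta > 0. By compactness, finitely many coordinates F compute d_C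
   on the ball up to eta. Along sigma we carry a point y of S with
   d_F(y, sigma s) <= 4 L eta (s - t0): to advance, follow a curve of V(y) inside S, whose
   F-coordinate velocities differ from those of sigma by at most 2 L eta because y and
   sigma(s) are 2 eta-close; the estimate passes to left limits by compactness of S near x.
   Hence sigma(s) is 2 eta-close to S for all s <= t0 + eps, where eps does not depend on
   eta, and closedness of S gives sigma(s) in S. *)

From Stdlib Require Import Reals Lra Lia ZArith List Classical.
From Coquelicot Require Import Coquelicot.
Open Scope R_scope.

Section Supremum.

Context {M : Type}.
Variables (C : M -> Prop) (f : M -> R) (B : R).
Hypothesis f_bounded : forall c, C c -> 0 <= f c <= B.

Lemma supC_finite :
  (exists c, C c) ->
  Lub_Rbar (fun r => exists c, C c /\ r = f c) = Finite (supC C f).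
Proof.
  intros [c Hc]. unfold supC.
  destruct (Lub_Rbar_correct (fun r => exists c, C c /\ r = f c)) as [Hub Hlub].
  destruct (Lub_Rbar (fun r => exists c, C c /\ r = f c)) as [l| |];
    [reflexivity| exfalso..].
  - assert (H := Hlub (Finite B)). simpl in H. apply H.
    intros r [c' [Hc' ->]]. apply f_bounded; auto.
  - assert (H := Hub (f c)). simpl in H. apply H. eauto.
Qed.

Lemma supC_empty : ~ (exists c, C c) -> supC C f = 0.
Proof.
  intros Hn. unfold supC.
  destruct (Lub_Rbar_correct (fun r => exists c, C c /\ r = f c)) as [_ Hlub].
  assert (H := Hlub m_infty).
  destruct (Lub_Rbar (fun r => exists c, C c /\ r = f c)); simpl in *;
    [exfalso.. | reflexivity];
    apply H; intros x [c [Hc _]]; apply Hn; eauto.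
Qed.

Lemma supC_ge c : C c -> f c <= supC C f.
Proof.
  intros Hc.
  destruct (Lub_Rbar_correct (fun r => exists c, C c /\ r = f c)) as [Hub _].
  rewrite supC_finite in Hub by eauto.
  apply (Hub (f c)). eauto.
Qed.

Lemma supC_nonneg : 0 <= supC C f.
Proof.
  destruct (classic (exists c, C c)) as [[c Hc]|Hn].
  - pose proof (f_bounded c Hc). pose proof (supC_ge c Hc). lra.
  - rewrite supC_empty; auto. lra.
Qed.

Lemma supC_lub m : 0 <= m -> (forall c, C c -> f c <= m) -> supC C f <= m.
Proof.
  intros Hm Hf. destruct (classic (exists c, C c)) as [Hne|Hn].
  - destruct (Lub_Rbar_correct (fun r => exists c, C c /\ r = f c)) as [_ Hlub].
    rewrite supC_finite in Hlub by auto.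
    apply (Hlub (Finite m)). intros r [c [Hc ->]]. simpl. auto.
  - rewrite supC_empty; auto.
Qed.

Lemma supC_approx e :
  0 < e -> 0 < supC C f -> exists c, C c /\ supC C f - e < f c.
Proof.
  intros He Hpos. destruct (classic (exists c, C c)) as [Hne|Hn].
  2: { rewrite supC_empty in Hpos; auto. lra. }
  apply NNPP. intros Hno.
  destruct (Lub_Rbar_correct (fun r => exists c, C c /\ r = f c)) as [_ Hlub].
  rewrite supC_finite in Hlub by auto.
  assert (H : supC C f <= supC C f - e); [|lra].
  apply (Hlub (Finite (supC C f - e))). intros r [c [Hc ->]]. simpl.
  apply Rnot_lt_le. intros Hlt. apply Hno. eauto.
Qed.

End Supremum.

Lemma real_induction (P : R -> Prop) a b : a <= b -> P a ->
  (forall s, a <= s < b -> (forall u, a <= u <= s -> P u) ->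
     exists h, 0 < h /\ forall u, s < u < s + h -> P u) ->
  (forall s, a < s <= b -> (forall u, a <= u < s -> P u) -> P s) ->
  forall s, a <= s <= b -> P s.
Proof.
  intros Hab Pa Hr Hl.
  set (E := fun t => a <= t <= b /\ forall u, a <= u <= t -> P u).
  assert (HEa : E a). { split; [lra|]. intros u Hu. replace u with a by lra. auto. }
  destruct (completeness E) as [m [Hub Hlub]].
  { exists b. intros t [Ht _]. lra. }
  { exists a; auto. }
  assert (Ham : a <= m) by (apply Hub; auto).
  assert (Hmb : m <= b) by (apply Hlub; intros t [Ht _]; lra).
  assert (Hbelow : forall u, a <= u < m -> P u).
  { intros u Hu. apply NNPP. intros Hn.
    assert (m <= u); [|lra]. apply Hlub. intros t [Ht Hp].
    apply Rnot_lt_le. intros Hlt. apply Hn. apply Hp. lra. }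
  assert (HEm : E m).
  { split; [lra|]. intros u Hu. destruct (Req_dec u m) as [->|]; [|apply Hbelow; lra].
    destruct (Req_dec a m) as [<-|Hne]; auto. apply Hl; [lra|]. auto. }
  assert (Hbm : b <= m).
  { apply Rnot_lt_le. intros Hlt.
    destruct (Hr m (conj Ham Hlt) (proj2 HEm)) as [h [Hh Hu]].
    set (t := Rmin (m + h/2) b).
    assert (E t).
    { unfold t; split. { split; [apply Rmin_glb; lra| apply Rmin_r]. }
      intros u Hu'. destruct (Rle_dec u m).
      - apply (proj2 HEm); lra.
      - apply Hu. split; [lra|]. pose proof (Rmin_l (m + h/2) b). lra. }
    assert (t <= m) by (apply Hub; auto).
    assert (m < t) by (unfold t; apply Rmin_glb_lt; lra). lra. }
  intros s Hs. apply (proj2 HEm). lra.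
Qed.

Lemma list_eventually_right {A : Type} (F : list A) (Q : A -> R -> Prop) :
  (forall c, In c F -> exists e, 0 < e /\ forall h, 0 < h < e -> Q c h) ->
  exists e, 0 < e /\ forall c h, In c F -> 0 < h < e -> Q c h.
Proof.
  induction F as [|a F IH]; intros H.
  - exists 1. split; [lra|]. intros c h [].
  - destruct IH as [e1 [He1 H1]]. { intros c Hc; apply H; simpl; auto. }
    destruct (H a (or_introl eq_refl)) as [e2 [He2 H2]].
    exists (Rmin e1 e2). split; [apply Rmin_glb_lt; auto|].
    intros c h [<-|Hc] Hh; pose proof (Rmin_l e1 e2); pose proof (Rmin_r e1 e2).
    + apply H2; lra.
    + apply H1; auto; lra.
Qed.

Lemma Rabs_incr_le_of_quot a b h v e :
  0 < h -> Rabs ((a - b) / h - v) < e -> Rabs (a - b - h * v) <= h * e.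
Proof.
  intros Hh H. replace (a - b - h * v) with (h * ((a - b) / h - v)) by (field; lra).
  rewrite Rabs_mult, (Rabs_pos_eq h) by lra. apply Rmult_le_compat_l; lra.
Qed.

Section Metric.

Context {M : Type}.
Variables (d : M -> M -> R) (C X : M -> Prop).
Hypothesis d_metric : is_metric d.

Lemma Rabs_dist_diff_le x y c : Rabs (d x c - d y c) <= d x y.
Proof.
  destruct d_metric as [_ _ Hsym Htri].
  pose proof (Htri x y c). pose proof (Htri y x c). rewrite (Hsym y x) in *.
  apply Rabs_le_between. lra.
Qed.

Lemma dC_family_bounded x y c : C c -> 0 <= Rabs (d x c - d y c) <= d x y.
Proof. split; [apply Rabs_pos|apply Rabs_dist_diff_le]. Qed.

Lemma dC_ge x y c : C c -> Rabs (d x c - d y c) <= dC d C x y.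
Proof. exact (supC_ge _ _ _ (dC_family_bounded x y) c). Qed.

Lemma dC_nonneg x y : 0 <= dC d C x y.
Proof. exact (supC_nonneg _ _ _ (dC_family_bounded x y)). Qed.

Lemma dC_le x y m :
  0 <= m -> (forall c, C c -> Rabs (d x c - d y c) <= m) -> dC d C x y <= m.
Proof. exact (supC_lub _ _ _ (dC_family_bounded x y) m). Qed.

Lemma dC_approx x y e :
  0 < e -> 0 < dC d C x y -> exists c, C c /\ dC d C x y - e < Rabs (d x c - d y c).
Proof. exact (supC_approx _ _ _ (dC_family_bounded x y) e). Qed.

Lemma dC_refl x : dC d C x x = 0.
Proof.
  apply Rle_antisym; [|apply dC_nonneg].
  apply dC_le; [lra|]. intros c _. rewrite Rminus_diag, Rabs_R0. lra.
Qed.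

Lemma dC_sym x y : dC d C x y = dC d C y x.
Proof.
  apply Rle_antisym; apply dC_le; try apply dC_nonneg;
    intros c Hc; rewrite Rabs_minus_sym; apply dC_ge; auto.
Qed.

Lemma dC_tri x y z : dC d C x z <= dC d C x y + dC d C y z.
Proof.
  apply dC_le.
  - pose proof (dC_nonneg x y); pose proof (dC_nonneg y z); lra.
  - intros c Hc. pose proof (dC_ge x y c Hc). pose proof (dC_ge y z c Hc).
    replace (d x c - d z c) with ((d x c - d y c) + (d y c - d z c)) by ring.
    eapply Rle_trans; [apply Rabs_triang|]. lra.
Qed.

Definition dCF (F : list M) (y z : M) : R :=
  fold_right (fun c acc => Rmax (Rabs (d y c - d z c)) acc) 0 F.

Lemma dCF_ge F y z c : In c F -> Rabs (d y c - d z c) <= dCF F y z.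
Proof.
  induction F as [|a F IH]; simpl; [tauto|].
  intros [->|H]; [apply Rmax_l|]. eapply Rle_trans; [apply IH; auto| apply Rmax_r].
Qed.

Lemma dCF_nonneg F y z : 0 <= dCF F y z.
Proof.
  induction F as [|a F IH]; simpl; [lra|]. eapply Rle_trans; [exact IH|apply Rmax_r].
Qed.

Lemma dCF_lub F y z m :
  0 <= m -> (forall c, In c F -> Rabs (d y c - d z c) <= m) -> dCF F y z <= m.
Proof.
  intros Hm. induction F as [|a F IH]; simpl; intros H; [lra|].
  apply Rmax_lub; [apply H; auto| apply IH; intros; apply H; auto].
Qed.

Lemma dCF_incl F G y z : incl F G -> dCF F y z <= dCF G y z.
Proof.
  intros HFG. apply dCF_lub; [apply dCF_nonneg|].
  intros c Hc. apply dCF_ge, HFG, Hc.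
Qed.

Lemma dCF_tri F x y z : dCF F x z <= dCF F x y + dCF F y z.
Proof.
  apply dCF_lub.
  - pose proof (dCF_nonneg F x y); pose proof (dCF_nonneg F y z); lra.
  - intros c Hc. pose proof (dCF_ge F x y c Hc). pose proof (dCF_ge F y z c Hc).
    replace (d x c - d z c) with ((d x c - d y c) + (d y c - d z c)) by ring.
    eapply Rle_trans; [apply Rabs_triang|]. lra.
Qed.

Lemma dCF_le_dC F y z : (forall c, In c F -> C c) -> dCF F y z <= dC d C y z.
Proof.
  intros HF. apply dCF_lub; [apply dC_nonneg|].
  intros c Hc. apply dC_ge; auto.
Qed.

Lemma dC_le_dCF_pair a b eta :
  0 < eta -> exists F, (forall c, In c F -> C c) /\ dC d C a b <= dCF F a b + eta.
Proof.
  intros Heta. destruct (Rle_dec (dC d C a b) eta) as [Hle|Hgt].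
  - exists nil. split; [intros c []|]. simpl. lra.
  - destruct (dC_approx a b eta Heta ltac:(lra)) as [c [Hc Hcc]].
    exists (c :: nil). split; [intros c' [<-|[]]; auto|].
    pose proof (dCF_ge (c :: nil) a b c (or_introl eq_refl)). lra.
Qed.

Lemma dC_le_dCF_pairs (P : list (M * M)) eta :
  0 < eta -> exists F, (forall c, In c F -> C c) /\
    forall a b, In (a, b) P -> dC d C a b <= dCF F a b + eta.
Proof.
  intros Heta. induction P as [|[a b] P IH].
  - exists nil. split; intros; contradiction.
  - destruct IH as [G [HG HPG]].
    destruct (dC_le_dCF_pair a b eta Heta) as [F [HF Hab]].
    exists (F ++ G). split.
    + intros c Hc. apply in_app_or in Hc. destruct Hc; auto.
    + intros a' b' [Heq|Hin].
      * inversion Heq; subst.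
        pose proof (dCF_incl F (F ++ G) a' b' (incl_appl G (incl_refl F))). lra.
      * pose proof (dCF_incl G (F ++ G) a' b' (incl_appr F (incl_refl G))).
        pose proof (HPG a' b' Hin). lra.
Qed.


Lemma dC_compact_closed_subset K P :
  dC_compact d C X K -> (forall y, P y -> K y) ->
  dC_open d C X (fun y => ~ P y) -> dC_compact d C X P.
Proof.
  intros [HKX HK] HPK Hop. split; [intros y Hy; apply HKX; auto|].
  intros I U HU Hcov.
  destruct (HK (option I) (fun o y => match o with Some i => U i y | None => ~ P y end))
    as [l Hl].
  - intros [i|]; auto.
  - intros y Hy. destruct (classic (P y)) as [Hp|Hp].
    + destruct (Hcov y Hp) as [i Hi]. exists (Some i); auto.
    + exists None; auto.
  - exists (flat_map (fun o => match o with Some i => i :: nil | None => nil end) l).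
    intros y Hy. destruct (Hl y (HPK y Hy)) as [[i|] [Hin Hu]].
    + exists i. split; auto. apply in_flat_map. exists (Some i). simpl; auto.
    + contradiction.
Qed.

Lemma dC_compact_closed_ball K P x r rho :
  dC_compact d C X K -> 0 < rho < r ->
  (forall y, X y -> dC d C x y < r -> K y) -> dC_closed d C X P ->
  dC_compact d C X (fun y => P y /\ dC d C x y <= rho).
Proof.
  intros HK Hrho HKball [HPX HPo]. apply (dC_compact_closed_subset K).
  - auto.
  - intros y [Hy Hd]. apply HKball; auto. lra.
  - intros y Hy Hn. destruct (classic (P y)) as [HP|HP].
    + assert (Hgt : rho < dC d C x y) by (apply Rnot_le_lt; intro; apply Hn; auto).
      exists (dC d C x y - rho). split; [lra|]. intros z Hz Hyz [_ Hz'].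
      pose proof (dC_tri x z y). rewrite (dC_sym z y) in *. lra.
    + destruct (HPo y Hy HP) as [r' [Hr' Hb]]. exists r'. split; auto.
      intros z Hz Hyz [Hz' _]. apply (Hb z Hz Hyz Hz').
Qed.

(* Cover [K] by the open sets [{y | 1/(n+1) < f y}] and keep the largest [n]. *)
Lemma dC_compact_lipschitz_pos_lb K (f : M -> R) :
  dC_compact d C X K ->
  (forall y z, X y -> X z -> f y - f z <= dC d C y z) ->
  (forall y, K y -> 0 < f y) -> exists mu, 0 < mu /\ forall y, K y -> mu < f y.
Proof.
  intros [HKX HK] Hlip Hpos.
  destruct (HK nat (fun n y => / (INR n + 1) < f y)) as [l Hl].
  - intros n y Hy Hlt. exists (f y - / (INR n + 1)). split; [lra|].
    intros z Hz Hd. pose proof (Hlip y z Hy Hz). lra.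
  - intros y Hy. pose proof (Hpos y Hy).
    destruct (archimed (/ f y)) as [Hup _].
    assert (Hz : (0 <= up (/ f y))%Z).
    { apply le_IZR. pose proof (Rinv_0_lt_compat _ H). lra. }
    exists (Z.to_nat (up (/ f y))). rewrite INR_IZR_INZ, Z2Nat.id; auto.
    assert (0 < / f y) by (apply Rinv_0_lt_compat; auto).
    rewrite <- (Rinv_inv (f y)) at 2. apply Rinv_lt_contravar; [nra|lra].
  - set (N := fold_right Nat.max 0%nat l).
    exists (/ (INR N + 1)). split.
    + apply Rinv_0_lt_compat. pose proof (pos_INR N); lra.
    + intros y Hy. destruct (Hl y Hy) as [n [Hin Hn]].
      assert (Hle : (n <= N)%nat).
      { unfold N; clear -Hin. induction l as [|a l IH]; simpl in *; [tauto|].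
        destruct Hin as [->|H]; [lia| specialize (IH H); lia]. }
      apply le_INR in Hle. eapply Rle_lt_trans; [|exact Hn].
      apply Rinv_le_contravar; [pose proof (pos_INR n)|]; lra.
Qed.

(* Compare [y, z] with their neighbours [a, b] in a finite [eta/8]-net. *)
Lemma dC_compact_dC_le_dCF K eta :
  dC_compact d C X K -> 0 < eta ->
  exists F, (forall c, In c F -> C c) /\
    forall y z, K y -> K z -> dC d C y z <= dCF F y z + eta.
Proof.
  intros [HKX HK] Heta.
  destruct (HK M (fun a y => dC d C a y < eta / 8)) as [L HL].
  - intros a y Hy Hay. exists (eta / 8 - dC d C a y). split; [lra|].
    intros z Hz Hyz. pose proof (dC_tri a y z). lra.
  - intros y Hy. exists y. rewrite dC_refl. lra.
  - destruct (dC_le_dCF_pairs (list_prod L L) (eta / 4) ltac:(lra)) as [F [HF HFL]].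
    exists F. split; auto. intros y z Hy Hz.
    destruct (HL y Hy) as [a [Ha Hay]]. destruct (HL z Hz) as [b [Hb Hbz]].
    pose proof (HFL a b (in_prod L L a b Ha Hb)).
    pose proof (dC_tri y a z). pose proof (dC_tri a b z). rewrite (dC_sym y a) in *.
    pose proof (dCF_tri F a y b). pose proof (dCF_tri F y z b).
    pose proof (dCF_le_dC F a y HF). pose proof (dCF_le_dC F z b HF).
    rewrite (dC_sym z b) in *. lra.
Qed.

Lemma dC_compact_dCF_sublevel_closed K F b p :
  dC_compact d C X K -> (forall c, In c F -> C c) ->
  (forall mu, 0 < mu -> exists q y, K y /\ dCF F y q <= b /\ dC d C q p < mu) ->
  exists y, K y /\ dCF F y p <= b.
Proof.
  intros HK HF Happrox. apply NNPP. intros Hn.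
  assert (Hlip : forall y z, X y -> X z -> (dCF F y p - b) - (dCF F z p - b) <= dC d C y z).
  { intros y z _ _. pose proof (dCF_tri F y z p). pose proof (dCF_le_dC F y z HF). lra. }
  assert (Hpos : forall y, K y -> 0 < dCF F y p - b).
  { intros y Hy. apply Rnot_le_lt. intros Hle. apply Hn. exists y. split; [auto|lra]. }
  destruct (dC_compact_lipschitz_pos_lb K (fun y => dCF F y p - b) HK Hlip Hpos)
    as [mu [Hmu Hmub]].
  destruct (Happrox mu Hmu) as [q [y [Hy [Hyq Hqp]]]].
  pose proof (Hmub y Hy). pose proof (dCF_tri F y q p). pose proof (dCF_le_dC F q p HF).
  lra.
Qed.

Lemma dC_closed_of_approx S p :
  dC_closed d C X S -> X p ->
  (forall eta, 0 < eta -> exists y, S y /\ dC d C p y < eta) -> S p.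
Proof.
  intros [HSX Hop] Hp H. apply NNPP. intros Hn.
  destruct (Hop p Hp Hn) as [r [Hr Hb]].
  destruct (H r Hr) as [y [Hy Hpy]]. apply (Hb y (HSX y Hy) Hpy Hy).
Qed.

Lemma dC_curve_left_approx sigma delta a s :
  dC_curve d C X sigma delta -> 0 <= a < s -> s < delta ->
  forall mu, 0 < mu -> exists u, a <= u < s /\ dC d C (sigma u) (sigma s) < mu.
Proof.
  intros [_ [_ Hcont]] Has Hs mu Hmu.
  destruct (Hcont s ltac:(lra) mu Hmu) as [e [He Hc]].
  exists (Rmax a (s - e / 2)).
  pose proof (Rmax_l a (s - e / 2)). pose proof (Rmax_r a (s - e / 2)).
  assert (Rmax a (s - e / 2) < s) by (apply Rmax_lub_lt; lra).
  split; [lra|]. apply Hc; [lra|]. apply Rabs_def1; lra.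
Qed.

Lemma dC_closed_left_limit S sigma delta a s :
  dC_closed d C X S -> dC_curve d C X sigma delta -> 0 <= a < s -> s < delta ->
  (forall u, a <= u < s -> S (sigma u)) -> S (sigma s).
Proof.
  intros HS Hcurve Has Hs Hbefore.
  apply (dC_closed_of_approx S); auto.
  { destruct Hcurve as [_ [HX _]]. apply HX. lra. }
  intros eta Heta.
  destruct (dC_curve_left_approx sigma delta a s Hcurve Has Hs eta Heta) as [u [Hu Hd]].
  exists (sigma u). rewrite dC_sym. auto.
Qed.

Lemma dCF_fwd_growth F (phi psi : R -> M) a b (v w : M -> R) k e :
  0 <= k -> 0 < e ->
  (forall c, In c F -> is_fwd_deriv (fun t => d (phi t) c) a (v c)) ->
  (forall c, In c F -> is_fwd_deriv (fun t => d (psi t) c) b (w c)) ->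
  (forall c, In c F -> Rabs (v c - w c) <= k) ->
  exists h0, 0 < h0 /\ forall h, 0 < h < h0 ->
    dCF F (phi (a + h)) (psi (b + h)) <= dCF F (phi a) (psi b) + (k + e) * h.
Proof.
  intros Hk He Hphi Hpsi Hvw.
  destruct (list_eventually_right F (fun c h =>
      Rabs ((d (phi (a + h)) c - d (phi a) c) / h - v c) < e / 2 /\
      Rabs ((d (psi (b + h)) c - d (psi b) c) / h - w c) < e / 2))
    as [h0 [Hh0 Hclose]].
  { intros c Hc.
    destruct (Hphi c Hc (e / 2) ltac:(lra)) as [e1 [He1 H1]].
    destruct (Hpsi c Hc (e / 2) ltac:(lra)) as [e2 [He2 H2]].
    exists (Rmin e1 e2). split; [apply Rmin_glb_lt; auto|].
    intros h Hh. pose proof (Rmin_l e1 e2); pose proof (Rmin_r e1 e2).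
    split; [apply H1| apply H2]; lra. }
  exists h0. split; auto. intros h Hh.
  apply dCF_lub; [pose proof (dCF_nonneg F (phi a) (psi b)); nra|].
  intros c Hc. destruct (Hclose c h Hc Hh) as [Hq1 Hq2].
  apply Rabs_incr_le_of_quot, Rabs_le_between in Hq1; [|lra].
  apply Rabs_incr_le_of_quot, Rabs_le_between in Hq2; [|lra].
  pose proof (Rabs_le_between (v c - w c) k) as [Hvw' _].
  specialize (Hvw' (Hvw c Hc)).
  assert (-(h * k) <= h * v c - h * w c <= h * k) by (split; nra).
  pose proof (dCF_ge F (phi a) (psi b) c Hc) as Hab.
  apply Rabs_le_between in Hab. apply Rabs_le_between. lra.
Qed.

Lemma coord_diff_le_dCT V y z c :
  vector_field d C X V -> X y -> X z -> C c ->
  Rabs (V y c - V z c) <= dCT d C y (V y) z (V z).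
Proof.
  intros HV Hy Hz Hc.
  destruct (HV y Hy) as [_ [_ [_ [_ [_ [By HBy]]]]]].
  destruct (HV z Hz) as [_ [_ [_ [_ [_ [Bz HBz]]]]]].
  unfold dCT. eapply Rle_trans; [|apply Rmax_r].
  apply (supC_ge C (fun c => Rabs (V y c - V z c)) (By + Bz)); auto.
  intros c' Hc'. split; [apply Rabs_pos|].
  pose proof (HBy c' Hc'); pose proof (HBz c' Hc').
  eapply Rle_trans; [apply Rabs_triang|]. rewrite Rabs_Ropp. lra.
Qed.


Section LocalStep.

Variables (S : M -> Prop) (V : M -> M -> R) (sigma : R -> M) (delta : R).
Hypothesis S_closed : dC_closed d C X S.
Hypothesis V_field : vector_field d C X V.
Hypothesis V_tangent_S : forall y, S y -> exists (phi : R -> M) (dl : R),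
  in_tangent_class d C X phi dl y (V y) /\ forall t, 0 <= t < dl -> S (phi t).
Hypothesis sigma_curve : dC_curve d C X sigma delta.
Hypothesis sigma_deriv :
  forall t, 0 <= t < delta -> fwd_coord_deriv d C sigma t (V (sigma t)).

Variables (t0 r L eps : R).
Let x := sigma t0.
Hypothesis x_in_S : S x.
Hypothesis t0_nonneg : 0 <= t0.
Hypothesis eps_pos : 0 < eps.
Hypothesis eps_in_domain : t0 + eps < delta.
Hypothesis L_pos : 0 < L.
Hypothesis L_eps_small : 4 * L * eps <= 1.
Hypothesis V_lipschitz : forall y z, X y -> X z -> dC d C x y < r -> dC d C x z < r ->
  dCT d C y (V y) z (V z) <= L * dC d C y z.
Hypothesis sigma_near : forall s, t0 <= s <= t0 + eps -> dC d C x (sigma s) < r / 8.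
Let ball := fun y => X y /\ dC d C x y <= r / 2.
Let S_ball := fun y => S y /\ dC d C x y <= r / 2.
Hypothesis ball_compact : dC_compact d C X ball.
Hypothesis S_ball_compact : dC_compact d C X S_ball.

Lemma radius_pos : 0 < r.
Proof. pose proof (sigma_near t0 ltac:(lra)) as H. unfold x in H. rewrite dC_refl in H. lra. Qed.

Lemma sigma_in_ball s : t0 <= s <= t0 + eps -> ball (sigma s).
Proof.
  intros Hs. destruct sigma_curve as [_ [HX _]].
  pose proof (sigma_near s Hs). pose proof radius_pos. split; [apply HX|]; lra.
Qed.

Lemma S_ball_in_ball y : S_ball y -> ball y.
Proof. intros [Hy Hxy]. split; [apply S_closed|]; auto. Qed.

Section Tracking.

Variables (eta : R) (F : list M).
Hypothesis eta_pos : 0 < eta.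
Hypothesis eta_small : eta <= r / 16.
Hypothesis F_coords : forall c, In c F -> C c.
Hypothesis F_approx : forall y z, ball y -> ball z -> dC d C y z <= dCF F y z + eta.

(* [2 eta]-close points have velocities [2 L eta = theta / 2] apart; the other half of
   [theta] absorbs the errors of the difference quotients. *)
Let theta := 4 * L * eta.

Let tracked s := exists y, S_ball y /\ dCF F y (sigma s) <= theta * (s - t0).

Lemma theta_drift_le s : t0 <= s <= t0 + eps -> theta * (s - t0) <= eta.
Proof.
  intros Hs. unfold theta.
  assert (L * (s - t0) <= L * eps) by (apply Rmult_le_compat_l; lra).
  nra.
Qed.

Section TrackedPoint.

Variables (s : R) (y : M).
Hypothesis s_range : t0 <= s <= t0 + eps.
Hypothesis y_in_S_ball : S_ball y.
Hypothesis y_tracks : dCF F y (sigma s) <= theta * (s - t0).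

Lemma tracked_point_close : dC d C y (sigma s) <= 2 * eta.
Proof.
  pose proof (F_approx y (sigma s) (S_ball_in_ball y y_in_S_ball) (sigma_in_ball s s_range)).
  pose proof (theta_drift_le s s_range). lra.
Qed.

Lemma tracked_point_near_center : dC d C x y < r / 4.
Proof.
  pose proof tracked_point_close. pose proof (sigma_near s s_range).
  pose proof (dC_tri x (sigma s) y). rewrite (dC_sym (sigma s) y) in *. lra.
Qed.

Lemma tracked_velocity_gap c : In c F -> Rabs (V y c - V (sigma s) c) <= theta / 2.
Proof.
  intros Hc. destruct (sigma_in_ball s s_range) as [HXs _].
  destruct (S_ball_in_ball y y_in_S_ball) as [HXy _].
  pose proof tracked_point_close. pose proof tracked_point_near_center.
  pose proof (sigma_near s s_range). pose proof radius_pos.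
  eapply Rle_trans; [apply coord_diff_le_dCT; auto|].
  eapply Rle_trans; [apply V_lipschitz; auto; lra|].
  unfold theta. nra.
Qed.

End TrackedPoint.

Lemma tracked_right_step s :
  t0 <= s < t0 + eps -> tracked s ->
  exists h, 0 < h /\ forall u, s < u < s + h -> tracked u.
Proof.
  intros Hs [y [Hy Hys]].
  assert (Hs' : t0 <= s <= t0 + eps) by lra.
  pose proof (tracked_point_near_center s y Hs' Hy Hys) as Hxy.
  pose proof (tracked_velocity_gap s y Hs' Hy Hys) as Hgap.
  destruct Hy as [HSy _].
  destruct (V_tangent_S y HSy)
    as [phi [dl [[[Hdl [_ phi_cont]] [phi0 [phi_deriv _]]] phi_S]]].
  destruct (phi_cont 0 ltac:(lra) (r / 4) ltac:(pose proof radius_pos; lra))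
    as [e1 [He1 phi_near]].
  destruct (dCF_fwd_growth F phi sigma 0 s (V y) (V (sigma s)) (theta / 2) (theta / 2))
    as [e2 [He2 Hgrowth]]; try (unfold theta; nra).
  { intros c Hc. apply phi_deriv, F_coords, Hc. }
  { intros c Hc. apply sigma_deriv; [lra| apply F_coords, Hc]. }
  { exact Hgap. }
  exists (Rmin (Rmin e1 e2) dl). split; [repeat apply Rmin_glb_lt; auto|].
  intros u Hu.
  pose proof (Rmin_l (Rmin e1 e2) dl); pose proof (Rmin_r (Rmin e1 e2) dl).
  pose proof (Rmin_l e1 e2); pose proof (Rmin_r e1 e2).
  exists (phi (u - s)). split; [split|].
  - apply phi_S. lra.
  - assert (dC d C (phi (u - s)) (phi 0) < r / 4).
    { apply phi_near; [lra|]. rewrite Rminus_0_r, Rabs_pos_eq; lra. }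
    pose proof (dC_tri x y (phi (u - s))). rewrite phi0, (dC_sym (phi (u - s)) y) in *.
    lra.
  - specialize (Hgrowth (u - s) ltac:(lra)).
    rewrite Rplus_0_l, phi0 in Hgrowth. replace (s + (u - s)) with u in Hgrowth by ring.
    assert (theta * (s - t0) + (theta / 2 + theta / 2) * (u - s) = theta * (u - t0))
      by field.
    lra.
Qed.

Lemma tracked_left_closed s :
  t0 < s <= t0 + eps -> (forall u, t0 <= u < s -> tracked u) -> tracked s.
Proof.
  intros Hs Hbefore.
  apply (dC_compact_dCF_sublevel_closed S_ball F (theta * (s - t0)) (sigma s));
    [exact S_ball_compact| exact F_coords|].
  intros mu Hmu.
  destruct (dC_curve_left_approx sigma delta t0 s sigma_curve ltac:(lra) ltac:(lra) mu Hmu)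
    as [u [Hu Hd]].
  destruct (Hbefore u Hu) as [y [Hy Hyu]].
  exists (sigma u), y. split; [exact Hy| split; [|exact Hd]].
  assert (theta * (u - t0) <= theta * (s - t0))
    by (apply Rmult_le_compat_l; unfold theta; nra).
  lra.
Qed.

Lemma sigma_close_to_S s :
  t0 <= s <= t0 + eps -> exists y, S y /\ dC d C y (sigma s) <= 2 * eta.
Proof.
  intros Hs.
  pose proof radius_pos.
  assert (Htracked : forall s, t0 <= s <= t0 + eps -> tracked s).
  { apply real_induction; [lra| | |apply tracked_left_closed].
    2: { intros u Hu Hupto. apply tracked_right_step; [lra| apply Hupto; lra]. }
    exists x. split; [split; [exact x_in_S| rewrite dC_refl; lra]|].
    pose proof (dCF_le_dC F x x F_coords) as Hxx. rewrite dC_refl in Hxx.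
    rewrite Rminus_diag, Rmult_0_r. exact Hxx. }
  destruct (Htracked s Hs) as [y [Hy Hys]].
  exists y. split; [apply Hy| exact (tracked_point_close s y Hs Hy Hys)].
Qed.

End Tracking.

Lemma sigma_stays_in_S s : t0 <= s <= t0 + eps -> S (sigma s).
Proof.
  intros Hs. apply (dC_closed_of_approx S); auto.
  { apply (sigma_in_ball s Hs). }
  pose proof radius_pos.
  intros eta0 Heta0.
  set (eta := Rmin (eta0 / 3) (r / 16)).
  assert (Heta : 0 < eta) by (apply Rmin_glb_lt; lra).
  assert (Heta_le : eta <= eta0 / 3) by apply Rmin_l.
  assert (Heta_small : eta <= r / 16) by apply Rmin_r.
  destruct (dC_compact_dC_le_dCF ball eta ball_compact Heta) as [F [HF HFapprox]].
  destruct (sigma_close_to_S eta F Heta Heta_small HF HFapprox s Hs) as [y [Hy Hys]].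
  exists y. rewrite dC_sym. split; auto. lra.
Qed.

End LocalStep.


Lemma solution_locally_in_S S V sigma delta t0 :
  dC_locally_compact d C X -> dC_closed d C X S -> vector_field d C X V ->
  locally_lipschitz_field d C X V ->
  (forall y, S y -> exists (phi : R -> M) (dl : R),
      in_tangent_class d C X phi dl y (V y) /\ forall t, 0 <= t < dl -> S (phi t)) ->
  is_solution d C X V sigma delta (sigma 0) ->
  0 <= t0 < delta -> S (sigma t0) ->
  exists eps, 0 < eps /\ forall s, t0 <= s <= t0 + eps -> S (sigma s).
Proof.
  intros HLC HS HV HL Htan [Hcurve [_ Hderiv]] Ht0 Hx.
  pose proof Hcurve as [Hdelta [HsX Hcont]].
  destruct (HL _ (HsX t0 Ht0)) as [r1 [K [Hr1 [HK Hlip]]]].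
  destruct (HLC _ (HsX t0 Ht0)) as [Kc [HKc [r2 [Hr2 HKball]]]].
  set (r := Rmin r1 r2).
  assert (Hr : 0 < r) by (apply Rmin_glb_lt; auto).
  assert (Hrr1 : r <= r1) by apply Rmin_l.
  assert (Hrr2 : r <= r2) by apply Rmin_r.
  destruct (Hcont t0 Ht0 (r / 8) ltac:(lra)) as [e0 [He0 Hnear]].
  set (eps := Rmin (Rmin (e0 / 2) (/ (4 * (K + 1)))) ((delta - t0) / 2)).
  assert (Heps1 : eps <= e0 / 2) by (eapply Rle_trans; [apply Rmin_l| apply Rmin_l]).
  assert (Heps2 : eps <= / (4 * (K + 1))) by (eapply Rle_trans; [apply Rmin_l| apply Rmin_r]).
  assert (Heps3 : eps <= (delta - t0) / 2) by apply Rmin_r.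
  assert (Heps : 0 < eps).
  { repeat apply Rmin_glb_lt; try lra. apply Rinv_0_lt_compat; lra. }
  assert (HKeps : 4 * (K + 1) * eps <= 1).
  { assert (H : 4 * (K + 1) * eps <= 4 * (K + 1) * / (4 * (K + 1)))
      by (apply Rmult_le_compat_l; lra).
    rewrite Rinv_r in H; lra. }
  exists eps. split; [exact Heps|]. intros s Hs.
  apply (sigma_stays_in_S S V sigma delta HS HV Htan Hcurve Hderiv t0 r (K + 1) eps);
    auto; try lra.
  - intros y z Hy Hz Hxy Hxz. eapply Rle_trans; [apply Hlip; auto; lra|].
    pose proof (dC_nonneg y z). nra.
  - intros u Hu. rewrite dC_sym. apply Hnear; [lra|]. apply Rabs_def1; lra.
  - apply (dC_compact_closed_ball Kc X _ r2); auto; [lra|].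
    split; [auto| intros y Hy Hn; contradiction].
  - apply (dC_compact_closed_ball Kc S _ r2); auto. lra.
Qed.

End Metric.

Theorem theorem8p1 (M : Type) (d : M -> M -> R) (X C S : M -> Prop)
  (V : M -> M -> R) :
  metric_coord_system d X C ->
  dC_locally_compact d C X ->
  dC_closed d C X S ->
  vector_field d C X V ->
  locally_lipschitz_field d C X V ->
  (forall x, S x -> exists (phi : R -> M) (delta : R),
      in_tangent_class d C X phi delta x (V x) /\
      forall t, 0 <= t < delta -> S (phi t)) ->
  forall (sigma : R -> M) (delta : R),
    is_solution d C X V sigma delta (sigma 0) ->
    S (sigma 0) ->
    forall t, 0 <= t < delta -> S (sigma t).
Proof.
  intros [Hm _] HLC HS HV HL Htan sigma delta Hsol HS0 t Ht.
  apply (real_induction (fun s => S (sigma s)) 0 t); auto; try lra.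
  - intros s Hs Hupto.
    destruct (solution_locally_in_S d C X Hm S V sigma delta s HLC HS HV HL Htan Hsol
                ltac:(lra) (Hupto s ltac:(lra))) as [eps [Heps Hloc]].
    exists eps. split; auto. intros u Hu. apply Hloc. lra.
  - intros s Hs Hbefore.
    apply (dC_closed_left_limit d C X Hm S sigma delta 0 s HS (proj1 Hsol)); auto; lra.
Qed.
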